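(* For $i=1,\dots,d$ let $\omega_i\subseteq\mathbb{R}$ be a nonempty open interval and $f_i:\omega_i\to\mathbb{R}$ a univariate function of Legendre type; let $\Omega=\prod_{i=1}^d\omega_i$ and $F(x)=\sum_{i=1}^d f_i(x_i)$, with Bregman divergence $D_F$. Let $A=\prod_{i=1}^d[a_i,b_i]$ be an axis-aligned box with $A\cap\Omega\neq\emptyset$, let $q\in\Omega$, and let $p$ be the Euclidean projection of $q$ onto $A$, i.e. $p_i=\min(\max(q_i,a_i),b_i)$. Then the Bregman projection divergence of $q$ onto $A$ satisfies $$\inf_{x\in A\cap\Omega} D_F(q\|x)=\sum_{i=1}^d D_{f_i}(q_i\|p_i)=D_F(q\|p).$$
   Context: A function $G:U\to\mathbb{R}$ on a nonempty open convex set $U$ is of Legendre type if it is differentiable, strictly convex, and, if $\partial U\neq\emptyset$, $\|\nabla G(x)\|\to\infty$ as $x\to\partial U$. The Bregman divergence generated by $G$ is $D_G(x\|y)=G(x)-G(y)-\langle\nabla G(y),x-y\rangle$; for univariate $f_i$ this is $D_{f_i}(s\|t)=f_i(s)-f_i(t)-f_i'(t)(s-t)$. *)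

From HB Require Import structures.
From mathcomp Require Import all_boot all_order all_algebra.
From mathcomp Require Import all_classical all_reals all_analysis.
Set Implicit Arguments. Unset Strict Implicit. Unset Printing Implicit Defensive.
Import Order.TTheory GRing.Theory Num.Theory.
Import numFieldNormedType.Exports.
Local Open Scope classical_set_scope.
Local Open Scope ring_scope.

Definition open_itv (R : realType) (lo hi : \bar R) : set R :=
  [set x | (lo < x%:E)%E /\ (x%:E < hi)%E].

Definition strictly_convex_on (R : realType) (U : set R) (f : R -> R) : Prop :=
  forall x y t, U x -> U y -> x != y -> 0 < t < 1 ->
    f (t * x + (1 - t) * y) < t * f x + (1 - t) * f y.

Definition legendre_univ (R : realType) (lo hi : \bar R) (f : R -> R) : Prop :=
  [/\ forall x, open_itv lo hi x -> derivable f x 1,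
      strictly_convex_on (open_itv lo hi) f,
      (forall r : R, lo = r%:E ->
         `|derive1 f x| @[x --> r^'+] --> +oo) &
      (forall r : R, hi = r%:E ->
         `|derive1 f x| @[x --> r^'-] --> +oo)].

Definition bregman1 (R : realType) (f : R -> R) (s t : R) : R :=
  f s - f t - derive1 f t * (s - t).

Definition sepF (R : realType) (d : nat) (f : 'I_d -> R -> R) (x : 'I_d -> R) : R :=
  \sum_(i < d) f i (x i).

Definition gradF (R : realType) (d : nat) (f : 'I_d -> R -> R) (x : 'I_d -> R)
  : 'I_d -> R := fun i => derive1 (f i) (x i).

Definition bregmanF (R : realType) (d : nat) (f : 'I_d -> R -> R)
  (q x : 'I_d -> R) : R :=
  sepF f q - sepF f x - \sum_(i < d) gradF f x i * (q i - x i).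

Definition Omega (R : realType) (d : nat) (lo hi : 'I_d -> \bar R) : set ('I_d -> R) :=
  [set x | forall i, open_itv (lo i) (hi i) (x i)].

Definition box (R : realType) (d : nat) (a b : 'I_d -> R) : set ('I_d -> R) :=
  [set x | forall i, a i <= x i <= b i].

Definition proj_box (R : realType) (d : nat) (a b q : 'I_d -> R) : 'I_d -> R :=
  fun i => Num.min (Num.max (q i) (a i)) (b i).

From HB Require Import structures.
From mathcomp Require Import all_boot all_order all_algebra.
From mathcomp Require Import all_classical all_reals all_analysis.
From mathcomp Require Import lra ring.

Set Implicit Arguments.
Unset Strict Implicit.
Unset Printing Implicit Defensive.

Import Order.TTheory GRing.Theory Num.Theory.
Import numFieldNormedType.Exports.
Local Open Scope classical_set_scope.
Local Open Scope ring_scope.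

(* Both sides are sums of univariate Bregman divergences, so it suffices to
   minimise each coordinate separately.  For a convex differentiable f,
   t |-> D_f(q_i || t) decreases as t moves towards q_i, and the clamped
   point p_i lies between q_i and x_i for every x in the box; hence p
   minimises. *)

Section clamp.
Variables (disp : Order.disp_t) (T : orderType disp).
Implicit Types a b q x : T.
Local Open Scope order_scope.

Lemma clamp_itv a b q : a <= b -> a <= Order.min (Order.max q a) b <= b.
Proof.
move=> ab; case: (leP q a) => [qa|aq].
  by rewrite (min_l ab) lexx ab.
by rewrite le_min (ltW aq) ab ge_min lexx orbT.
Qed.

Lemma clamp_between a b q x : a <= x <= b ->
  let p := Order.min (Order.max q a) b in (q <= p <= x) || (x <= p <= q).
Proof.
case/andP=> ax xb /=; case: (leP q a) => [qa|aq].
  by rewrite (min_l (le_trans ax xb)) qa ax.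
case: (leP q b) => [_|/ltW bq]; last by rewrite xb bq orbT.
by rewrite lexx andbT le_total.
Qed.

End clamp.

Section univariate.
Variable R : realType.
Implicit Types (U : set R) (f : R -> R).

Lemma strictly_convex_on_convex U f :
  strictly_convex_on U f -> convex_function (U : set (convex_lmodType R^o)) f.
Proof.
move=> cvx t x y /[!inE] Ux Uy; rewrite convRE.
change (f (t%:num * x + (1 - t%:num) * y) <= t%:num * f x + (1 - t%:num) * f y).
have [->|xy] := eqVneq x y; first by rewrite -mulrDl -mulrDl subrKC !mul1r.
have [->|t0] := eqVneq t%:num 0; first by rewrite subr0 !mul0r !mul1r !add0r.
have [->|t1] := eqVneq t%:num 1; first by rewrite subrr !mul0r !mul1r !addr0.
by apply/ltW/cvx; rewrite // lt_neqAle eq_sym t0 ge0 lt_neqAle t1 le1.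
Qed.

Lemma convex_tangent_le U f x y :
  convex_function (U : set (convex_lmodType R^o)) f -> U x -> U y ->
  derivable f x 1 -> f x + derive1 f x * (y - x) <= f y.
Proof.
move=> cvx Ux Uy dfx.
have dfx' := iffLR (derivable1_diffP _ _) dfx.
have Dv : h^-1 *: ((f \o shift x) (h *: (y - x)) - f x) @[h --> 0^']
            --> 'D_(y - x) f x.
  exact: (@diff_derivable _ _ _ _ _ (y - x) dfx').
rewrite deriveE // (deriv1E dfx) /= in Dv.
(* the chord from x to y bounds every right difference quotient *)
have secant : \forall h \near 0^'+,
    h^-1 *: ((f \o shift x) (h *: (y - x)) - f x) <= f y - f x.
  near=> h.
  have h0 : 0 < h by near: h; exact: nbhs_right_gt.
  have h1 : h < 1 by near: h; exact: nbhs_right_lt.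
  have := cvx (Itv01 (ltW h0) (ltW h1)) y x; rewrite !inE => /(_ Uy Ux).
  rewrite convRE.
  have -> : (f \o shift x) (h *: (y - x)) = f (h * y + (1 - h) * x).
    by congr f; change (h * (y - x) + x = h * y + (1 - h) * x); ring.
  change (f (h * y + (1 - h) * x) <= h * f y + (1 - h) * f x ->
          h^-1 * (f (h * y + (1 - h) * x) - f x) <= f y - f x).
  by move=> chord; rewrite ler_pdivrMl //; lra.
have slope_le : (y - x) *: derive1 f x <= f y - f x.
  rewrite -(cvg_lim _ (cvg_dnbhs_at_right Dv)) //.
  exact: limr_le (cvgP _ (cvg_dnbhs_at_right Dv)) secant.
have : (y - x) * derive1 f x <= f y - f x := slope_le.
lra.
Unshelve. all: by end_near.
Qed.

Lemma convex_derive1_le U f x y :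
  convex_function (U : set (convex_lmodType R^o)) f -> U x -> U y ->
  derivable f x 1 -> derivable f y 1 -> x <= y -> derive1 f x <= derive1 f y.
Proof.
move=> cvx Ux Uy dfx dfy xy.
have := convex_tangent_le cvx Ux Uy dfx.
have := convex_tangent_le cvx Uy Ux dfy.
have [->|x_ne_y] := eqVneq x y; first by [].
have : x < y by rewrite lt_neqAle x_ne_y xy.
nra.
Qed.

Lemma bregman1_le_between U f q x y :
  convex_function (U : set (convex_lmodType R^o)) f -> U x -> U y ->
  derivable f x 1 -> derivable f y 1 ->
  (q <= y <= x) || (x <= y <= q) -> bregman1 f q y <= bregman1 f q x.
Proof.
move=> cvx Ux Uy dfx dfy yq.
have tangent := convex_tangent_le cvx Ux Uy dfx.
have slopes : 0 <= (derive1 f y - derive1 f x) * (q - y).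
  case/orP: yq => /andP[].
  - move=> q_y y_x; apply: mulr_le0; rewrite subr_le0 //.
    exact: convex_derive1_le cvx Uy Ux dfy dfx y_x.
  - move=> x_y y_q; apply: mulr_ge0; rewrite subr_ge0 //.
    exact: convex_derive1_le cvx Ux Uy dfx dfy x_y.
rewrite /bregman1; lra.
Qed.

Lemma open_itv_between (lo hi : \bar R) u v w :
  open_itv lo hi u -> open_itv lo hi v -> (u <= w <= v) || (v <= w <= u) ->
  open_itv lo hi w.
Proof.
move=> [lo_u u_hi] [lo_v v_hi] /orP[]/andP[l r]; split.
- by apply: (lt_le_trans lo_u); rewrite lee_fin.
- by apply: (le_lt_trans _ v_hi); rewrite lee_fin.
- by apply: (lt_le_trans lo_v); rewrite lee_fin.
- by apply: (le_lt_trans _ u_hi); rewrite lee_fin.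
Qed.

Lemma mem_lbound_inf (E : set R) x : E x -> lbound E x -> inf E = x.
Proof.
move=> Ex lbx; apply/eqP; rewrite eq_le lb_le_inf ?andbT //; last by exists x.
by apply: ge_inf => //; exists x.
Qed.

End univariate.

Lemma bregmanF_sum (R : realType) d (f : 'I_d -> R -> R) q x :
  bregmanF f q x = \sum_(i < d) bregman1 (f i) (q i) (x i).
Proof. by rewrite /bregmanF /sepF /gradF /bregman1 -!sumrB. Qed.

Lemma proj_box_in_box (R : realType) d (a b q z : 'I_d -> R) :
  box a b z -> box a b (proj_box a b q).
Proof. by move=> zA i; case/andP: (zA i) => az zb; apply/clamp_itv/(le_trans az). Qed.

Lemma proj_box_between (R : realType) d (a b q x : 'I_d -> R) :
  box a b x -> forall i,
  (q i <= proj_box a b q i <= x i) || (x i <= proj_box a b q i <= q i).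
Proof. by move=> xA i; exact: clamp_between (xA i). Qed.

Theorem corollary1 (R : realType) (d : nat) (lo hi : 'I_d -> \bar R)
  (f : 'I_d -> R -> R) (a b q : 'I_d -> R) :
  (forall i, (lo i < hi i)%E) ->
  (forall i, legendre_univ (lo i) (hi i) (f i)) ->
  box a b `&` Omega lo hi !=set0 ->
  Omega lo hi q ->
  inf [set bregmanF f q x | x in box a b `&` Omega lo hi]
    = \sum_(i < d) bregman1 (f i) (q i) (proj_box a b q i)
  /\ \sum_(i < d) bregman1 (f i) (q i) (proj_box a b q i)
    = bregmanF f q (proj_box a b q).
Proof.
move=> _ leg [z [zA zO]] qO.
have pO : Omega lo hi (proj_box a b q).
  by move=> i; apply: open_itv_between (qO i) (zO i) (proj_box_between q zA i).
split; last by rewrite bregmanF_sum.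
rewrite -bregmanF_sum; apply: mem_lbound_inf.
  by exists (proj_box a b q) => //; split; [exact: proj_box_in_box zA | exact: pO].
move=> _ [x [xA xO] <-]; rewrite !bregmanF_sum; apply: ler_sum => i _.
have [der cvx _ _] := leg i.
exact: bregman1_le_between (strictly_convex_on_convex cvx) (xO i) (pO i)
  (der _ (xO i)) (der _ (pO i)) (proj_box_between q xA i).
Qed.
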